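(* Let $m\ge 1$ be an integer and let $G^m$ be the graph obtained as follows: take $m$ disjoint copies $F_1,\dots,F_m$ of the graph $F$, denoting by $x_s,x'_s$ the copies of $x,x'$ in $F_s$; for $s=1,\dots,m-1$ identify $x'_s$ with $x_{s+1}$ and call the resulting vertex $w_{s+1}$; finally identify $x_1$ with $x'_m$ and call the resulting vertex $w_1$. Then $G^m$ has an acyclic $(\mathcal{S}_3,\mathcal{S}_3)$-colouring, and in every acyclic $(\mathcal{S}_3,\mathcal{S}_3)$-colouring of $G^m$ the vertices $w_1,\dots,w_m$ all have the same colour and each $w_s$ is $3$-saturated.
   Context: $F$ is the graph with vertex set $\{a,b,c,d,e,g,h,i,x,x'\}$ and edge set $\{de,\ da,\ ae,\ dc,\ ec,\ ac,\ eg,\ cg,\ db,\ ab,\ cb,\ gb,\ ex',\ bx',\ di,\ ix,\ ah,\ hx\}$. An acyclic $(\mathcal{S}_3,\mathcal{S}_3)$-colouring of a graph $G$ is a map $c:V(G)\to\{1,2\}$ (not necessarily proper) such that each of the two colour classes induces a subgraph of maximum degree at most $3$, and there is no cycle in $G$ every edge of which joins a vertex of colour $1$ to a vertex of colour $2$. A vertex $v$ is $3$-saturated if exactly $3$ of its neighbours have colour $c(v)$. *)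

From mathcomp Require Import all_boot.
Set Implicit Arguments. Unset Strict Implicit. Unset Printing Implicit Defensive.

(* Vertices of F encoded as 'I_10:
   a=0, b=1, c=2, d=3, e=4, g=5, h=6, i=7, x=8, x'=9. *)
Definition F_edges : seq (nat * nat) :=
  [:: (3,4); (3,0); (0,4); (3,2); (4,2); (0,2); (4,5); (2,5); (3,1); (0,1);
      (2,1); (5,1); (4,9); (1,9); (3,7); (7,8); (0,6); (6,8)].

Definition F_adj (u v : 'I_10) : bool :=
  ((val u, val v) \in F_edges) || ((val v, val u) \in F_edges).

(* Vertices of G^m: the 8 non-identified vertices a..i of each copy F_s
   (s : 'I_m), plus the identified vertices w_s (s : 'I_m).
   Copy s (0-based) has x_s = w_s and x'_s = w_{s+1 mod m}. *)
Definition Gvert (m : nat) := (('I_m * 'I_8) + 'I_m)%type.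

Definition w (m : nat) (s : 'I_m) : Gvert m := inr s.

Definition phi (m : nat) (s : 'I_m) (f : 'I_10) : Gvert m :=
  if val f == 8 then inr s
  else if val f == 9 then inr (ordS s)
  else inl (s, inord (val f)).

Definition Gadj (m : nat) (u v : Gvert m) : bool :=
  [exists s : 'I_m, exists f1 : 'I_10, exists f2 : 'I_10,
     [&& F_adj f1 f2, phi s f1 == u & phi s f2 == v]].

Definition same_col_nbrs (T : finType) (adj : rel T) (c : T -> bool) (v : T) :=
  #|[set u | adj v u && (c u == c v)]|.

Definition has_cycle (T : finType) (r : rel T) : Prop :=
  exists p : seq T, [/\ 3 <= size p, uniq p & cycle r p].

Definition acyclic_S3S3_colouring (T : finType) (adj : rel T) (c : T -> bool) : Prop :=
  (forall v, same_col_nbrs adj c v <= 3) /\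
  ~ has_cycle [rel u v | adj u v && (c u != c v)].

Definition saturated3 (T : finType) (adj : rel T) (c : T -> bool) (v : T) : Prop :=
  same_col_nbrs adj c v = 3.

From mathcomp Require Import all_boot zify.
From Stdlib Require Import FunctionalExtensionality.
Set Implicit Arguments. Unset Strict Implicit. Unset Printing Implicit Defensive.

(** In every acyclic (S3,S3)-colouring of the gadget F, the ports x and x' get
   the same colour, h and i share the colour of x, and e or b shares the colour
   of x'; this is checked by enumerating the 2^10 colourings of F against the
   degree bound and thirteen cycles of F.  Around G^m this forces all w_s to
   have one colour, and w_s then has three neighbours of its colour: h_s, i_s
   and one of e_(s-1), b_(s-1).  For existence, give a, b, c, d one colour and
   all other vertices the other one: its bichromatic subgraph is a forest, as
   certified by a rank function under which every vertex has at most one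
   bichromatic neighbour of rank at least its own. *)

Definition bichromatic (T : finType) (adj : rel T) (c : T -> bool) : rel T :=
  [rel u v | adj u v && (c u != c v)].

Lemma bichromatic_sym (T : finType) (adj : rel T) (c : T -> bool) :
  symmetric adj -> symmetric (bichromatic adj c).
Proof. by move=> adj_sym u v; rewrite /bichromatic /= adj_sym eq_sym. Qed.

Lemma no_cycle_of_rank (T : finType) (r : rel T) (rk : T -> nat) :
  symmetric r ->
  (forall v u1 u2, r v u1 -> r v u2 -> rk v <= rk u1 -> rk v <= rk u2 -> u1 = u2) ->
  ~ has_cycle r.
Proof.
move=> r_sym rk_cert [[|x0 p] [size_p uniq_p cycle_p]] //.
pose v := [arg min_(v < x0 in x0 :: p) rk v].
have [v_p v_min] : v \in x0 :: p /\ forall u, u \in x0 :: p -> rk v <= rk u.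
  by rewrite /v; case: arg_minnP => [|y y_p y_min]; rewrite ?mem_head.
have [i q rot_p] := rot_to v_p.
have : 3 <= size (v :: q) by rewrite -rot_p size_rot.
have : uniq (v :: q) by rewrite -rot_p rot_uniq.
have : cycle r (v :: q) by rewrite -rot_p rot_cycle.
have q_p u : u \in q -> rk v <= rk u.
  by move=> u_q; apply: v_min; rewrite -(mem_rot i) rot_p inE u_q orbT.
case: q rot_p q_p => [|y [|y' q]] // _ q_p.
rewrite /cycle rcons_path => /andP [/andP [r_vy _] r_zv] /and3P [_ /negP y_q _] _.
apply: y_q; rewrite (rk_cert v y (last y' q)) ?mem_last ?q_p //.
- by rewrite r_sym.
- by rewrite mem_head.
- by rewrite inE mem_last orbT.
Qed.

Lemma ordS_invariant_const (T : Type) n (f : 'I_n -> T) :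
  (forall s, f (ordS s) = f s) -> forall s t, f s = f t.
Proof.
case: n f => [|n] f fS; first by move=> [].
have f_ord0 k (lt_k : k < n.+1) : f (Ordinal lt_k) = f ord0.
  elim: k lt_k => [|k IHk] lt_k; first by congr f; apply: val_inj.
  rewrite -(IHk (ltnW lt_k)) -[RHS]fS; congr f; apply: val_inj.
  by rewrite /= modn_small.
by move=> [s lt_s] [t lt_t]; rewrite !f_ord0.
Qed.

Notation Fa := (@Ordinal 10 0 isT).
Notation Fb := (@Ordinal 10 1 isT).
Notation Fc := (@Ordinal 10 2 isT).
Notation Fd := (@Ordinal 10 3 isT).
Notation Fe := (@Ordinal 10 4 isT).
Notation Fg := (@Ordinal 10 5 isT).
Notation Fh := (@Ordinal 10 6 isT).
Notation Fi := (@Ordinal 10 7 isT).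
Notation Fx := (@Ordinal 10 8 isT).
Notation Fx' := (@Ordinal 10 9 isT).

(* [enum 'I_10] does not reduce under [vm_compute]; this list does. *)
Definition F_vertices : seq 'I_10 := [:: Fa; Fb; Fc; Fd; Fe; Fg; Fh; Fi; Fx; Fx'].

Lemma enum_F : enum 'I_10 = F_vertices.
Proof. by apply: (inj_map val_inj); rewrite val_enum_ord. Qed.

Lemma mem_F (v : 'I_10) : v \in F_vertices.
Proof. by rewrite -enum_F mem_enum. Qed.

Lemma same_col_nbrsF (col : 'I_10 -> bool) v :
  same_col_nbrs F_adj col v = count (fun u => F_adj v u && (col u == col v)) F_vertices.
Proof. by rewrite /same_col_nbrs cardsE cardE /enum_mem size_filter -enumT enum_F. Qed.

Lemma F_adj_sym : symmetric F_adj.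
Proof. by move=> u v; rewrite /F_adj orbC. Qed.

Lemma F_port (f : 'I_10) : 8 <= f -> f = Fx \/ f = Fx'.
Proof.
move=> ge8_f; have [e|e] : f = 8 :> nat \/ f = 9 :> nat by move: (ltn_ord f); lia.
- by left; apply: val_inj; exact: e.
- by right; apply: val_inj; exact: e.
Qed.

Lemma F_port_nbrs v : ~~ (F_adj v Fx && F_adj v Fx').
Proof. by move: v (mem_F v); apply/allP; vm_compute. Qed.

(* Cycles of F avoiding x or x': they stay cycles in G^m even for m = 1, where
   x and x' are identified. *)
Definition F_cycles : seq (seq 'I_10) :=
  [:: [:: Fa; Fb; Fd; Fe]; [:: Fa; Fd; Fc; Fe]; [:: Fa; Fc; Fe; Fd];
      [:: Fa; Fe; Fg; Fc]; [:: Fc; Fd; Fe; Fg]; [:: Fa; Fb; Fd; Fc];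
      [:: Fa; Fc; Fd; Fe]; [:: Fa; Fb; Fc; Fd]; [:: Fa; Fd; Fb; Fc];
      [:: Fb; Fg; Fe; Fc]; [:: Fb; Fx'; Fe; Fc];
      [:: Fa; Fh; Fx; Fi; Fd; Fe]; [:: Fa; Fh; Fx; Fi; Fd; Fb]].

Lemma F_cyclesP q : q \in F_cycles ->
  [&& uniq q, 3 <= size q & ~~ ((Fx \in q) && (Fx' \in q))].
Proof. by move: q; apply/allP; vm_compute. Qed.

Definition F_admissible (col : 'I_10 -> bool) : bool :=
  all (fun v => count (fun u => F_adj v u && (col u == col v)) F_vertices <= 3)
      F_vertices
  && all (fun q => ~~ cycle (bichromatic F_adj col) q) F_cycles.

Definition F_forced (col : 'I_10 -> bool) : bool :=
  [&& col Fx' == col Fx, col Fh == col Fx, col Fi == col Fx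
    & (col Fe == col Fx') || (col Fb == col Fx')].

Lemma F_admissible_forced (col : 'I_10 -> bool) :
  F_admissible col -> F_forced col.
Proof.
have enumerate b0 b1 b2 b3 b4 b5 b6 b7 b8 b9 :
    let col' := nth false [:: b0; b1; b2; b3; b4; b5; b6; b7; b8; b9] in
    F_admissible col' ==> F_forced col'.
  by move: b0 b1 b2 b3 b4 b5 b6 b7 b8 b9; do 10 case; vm_compute.
have col_nth f : col f = nth false (map col F_vertices) f.
  by rewrite (nth_map Fa) ?ltn_ord // -enum_F nth_ord_enum.
rewrite (functional_extensionality _ _ col_nth).
exact/implyP/enumerate.
Qed.

Definition inner (f : 'I_8) : 'I_10 := widen_ord (isT : 8 <= 10) f.

Lemma inner_low (f : 'I_8) : inner f < 8.
Proof. exact: ltn_ord f. Qed.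

Section Copies.

Variable m : nat.
Implicit Types (s t : 'I_m) (f g : 'I_10) (c : Gvert m -> bool).

Lemma phi_low s f : f < 8 -> phi s f = inl (s, inord f).
Proof.
rewrite /phi => lt8_f; case: eqP => [e|_]; first by rewrite e in lt8_f.
by case: eqP => // e; rewrite e in lt8_f.
Qed.

Lemma phi_low_inj s t f g : f < 8 -> phi t g = phi s f -> t = s /\ g = f.
Proof.
move=> lt8_f; rewrite (phi_low _ lt8_f).
have [lt8_g|/F_port [->|->] //] := ltnP g 8.
by rewrite phi_low // => -[-> /(congr1 val)]; rewrite /= !inordK // => /val_inj.
Qed.

Lemma phi_low_neq s t f g : f < 8 -> g < 8 -> f != g -> phi s f != phi t g.
Proof.
move=> _ lt8_g f_g; apply/eqP => /(phi_low_inj lt8_g) [_ e].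
by rewrite e eqxx in f_g.
Qed.

Lemma phi_inj_in s (A : {pred 'I_10}) :
  ~~ ((Fx \in A) && (Fx' \in A)) -> {in A &, injective (phi s)}.
Proof.
move=> no_ports f g f_A g_A e.
have [lt8_f|] := ltnP f 8; first by case: (phi_low_inj lt8_f (esym e)).
have [lt8_g _|] := ltnP g 8; first by case: (phi_low_inj lt8_g e).
by move=> /F_port [] eg /F_port [] ef; subst f g => //; rewrite f_A g_A in no_ports.
Qed.

Lemma phi_port s t f :
  phi t f = w s -> (f = Fx /\ t = s) \/ (f = Fx' /\ t = ord_pred s).
Proof.
have [lt8_f|/F_port [->|->] [<-]] := ltnP f 8; first by rewrite phi_low.
- by left.
- by right; rewrite ordSK.
Qed.

Lemma phi_inner s (f : 'I_8) : phi s (inner f) = inl (s, f).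
Proof.
rewrite phi_low ?inner_low //.
by congr (inl (_, _)); apply: val_inj; rewrite /= inordK.
Qed.

Lemma GadjP u v :
  reflect (exists t f g, [/\ F_adj f g, phi t f = u & phi t g = v]) (@Gadj m u v).
Proof.
apply: (iffP existsP) => [[t /existsP [f /existsP [g /and3P [fg /eqP fu /eqP gv]]]]|].
  by exists t, f, g.
move=> [t [f [g [fg fu gv]]]]; exists t; apply/existsP; exists f; apply/existsP.
by exists g; rewrite fg fu gv !eqxx.
Qed.

Lemma Gadj_phi s f g : F_adj f g -> Gadj (phi s f) (phi s g).
Proof. by move=> fg; apply/GadjP; exists s, f, g. Qed.

Lemma Gadj_sym : symmetric (@Gadj m).
Proof.
move=> u v; apply/GadjP/GadjP => -[t [f [g [fg fu gv]]]];
  by exists t, g, f; rewrite F_adj_sym.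
Qed.

Lemma same_col_nbrs_copy c s v :
  same_col_nbrs F_adj (fun f => c (phi s f)) v <= same_col_nbrs (@Gadj m) c (phi s v).
Proof.
rewrite /same_col_nbrs -(card_in_imset (f := phi s)).
  apply/subset_leq_card/subsetP => _ /imsetP [u + ->].
  by rewrite !inE => /andP [vu ->]; rewrite Gadj_phi.
by apply: sub_in2 (phi_inj_in (F_port_nbrs v)) => u; rewrite inE => /andP [].
Qed.

Lemma has_cycle_copy c s q :
  q \in F_cycles -> cycle (bichromatic F_adj (fun f => c (phi s f))) q ->
  has_cycle (bichromatic (@Gadj m) c).
Proof.
move=> /F_cyclesP /and3P [uniq_q size_q no_ports] cycle_q.
exists (map (phi s) q); split; first by rewrite size_map.
  by rewrite map_inj_in_uniq //; apply: phi_inj_in.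
rewrite cycle_map; apply: sub_cycle cycle_q => u v /andP [uv col_uv].
by apply/andP; split => //; apply: Gadj_phi.
Qed.

Lemma F_admissible_copy c s :
  acyclic_S3S3_colouring (@Gadj m) c -> F_admissible (fun f => c (phi s f)).
Proof.
move=> [deg acyc]; apply/andP; split.
  apply/allP => v _; rewrite -same_col_nbrsF.
  exact: leq_trans (same_col_nbrs_copy c s v) (deg _).
apply/allP => q q_F; apply/negP => cycle_q.
exact: acyc (has_cycle_copy q_F cycle_q).
Qed.

Lemma w_col_ordS c s :
  acyclic_S3S3_colouring (@Gadj m) c -> c (w (ordS s)) = c (w s).
Proof. by move=> /(F_admissible_copy s) /F_admissible_forced /and4P [/eqP]. Qed.

Lemma w_saturated c s :
  acyclic_S3S3_colouring (@Gadj m) c -> saturated3 (@Gadj m) c (w s).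
Proof.
move=> acyc; have [deg _] := acyc; apply/eqP; rewrite eqn_leq deg /=.
set t := ord_pred s.
have /and4P [_ /eqP col_h /eqP col_i _] :=
  F_admissible_forced (F_admissible_copy s acyc).
have /and4P [_ _ _ col_eb] := F_admissible_forced (F_admissible_copy t acyc).
have phi_x : phi s Fx = w s by [].
have phi_x' : phi t Fx' = w s by rewrite /phi /= ord_predK.
have [y [y_low y_nbr y_col]] : exists y : 'I_10,
    [/\ [&& y < 8, y != Fh & y != Fi], F_adj Fx' y & c (phi t y) == c (w s)].
  by rewrite -phi_x'; case/orP: col_eb => ?; [exists Fe | exists Fb].
have /and3P [lt8_y y_h y_i] := y_low.
have uniq3 : uniq [:: phi s Fh; phi s Fi; phi t y].
  by rewrite /= !inE negb_or !phi_low_neq // eq_sym.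
apply: (@leq_trans #|[:: phi s Fh; phi s Fi; phi t y]|).
  by rewrite (card_uniqP uniq3).
apply/subset_leq_card/subsetP => u.
rewrite !inE => /or3P [] /eqP ->.
- by rewrite -phi_x Gadj_phi // col_h eqxx.
- by rewrite -phi_x Gadj_phi // col_i eqxx.
- by rewrite -phi_x' Gadj_phi // phi_x' y_col.
Qed.

Definition copywise (T : Type) (h : 'I_10 -> T) (v : Gvert m) : T :=
  match v with inl p => h (inner p.2) | inr _ => h Fx end.

Lemma copywise_phi (T : Type) (h : 'I_10 -> T) t f :
  h Fx = h Fx' -> copywise h (phi t f) = h f.
Proof.
move=> h_ports; have [lt8_f|/F_port [->|->] //] := ltnP f 8.
by rewrite phi_low //=; congr h; apply: val_inj; rewrite /= inordK.
Qed.

Section LiftedColouring.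

Variable col : 'I_10 -> bool.
Hypothesis col_ports : col Fx = col Fx'.

Lemma same_col_nbrs_lift_inner s f : f < 8 ->
  same_col_nbrs (@Gadj m) (copywise col) (phi s f) <= same_col_nbrs F_adj col f.
Proof.
move=> lt8_f; rewrite /same_col_nbrs.
apply: leq_trans (leq_imset_card (phi s) _); apply/subset_leq_card/subsetP => u.
rewrite inE => /andP [/GadjP [t [f' [g [f'g /(phi_low_inj lt8_f) [-> f'_f] <-]]]]].
subst f'; rewrite !copywise_phi // => col_g.
by apply/imsetP; exists g; rewrite // inE f'g.
Qed.

Lemma same_col_nbrs_lift_port s :
  same_col_nbrs (@Gadj m) (copywise col) (w s)
    <= same_col_nbrs F_adj col Fx + same_col_nbrs F_adj col Fx'.
Proof.
rewrite /same_col_nbrs; set N := fun f => [set u | F_adj f u && (col u == col f)].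
apply: leq_trans (leq_add (leq_imset_card (phi s) (N Fx))
                          (leq_imset_card (phi (ord_pred s)) (N Fx'))).
apply: leq_trans (leq_card_setU _ _); apply/subset_leq_card/subsetP => u.
rewrite inE => /andP [/GadjP [t [f [g [fg /phi_port port_f <-]]]]].
rewrite copywise_phi // [copywise _ _]/= => col_g.
rewrite inE; case: port_f => -[ef ->]; subst f; apply/orP; [left|right];
  by apply/imsetP; exists g; rewrite // inE fg -?col_ports.
Qed.

Lemma bichromatic_lift v u :
  bichromatic (@Gadj m) (copywise col) v u ->
  exists t f g, [/\ phi t f = v, phi t g = u & bichromatic F_adj col f g].
Proof.
move=> /andP [/GadjP [t [f [g [fg <- <-]]]]]; rewrite !copywise_phi // => col_fg.
by exists t, f, g; split => //; apply/andP.
Qed.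

End LiftedColouring.

Definition col0 (f : 'I_10) : bool := f < 4.
Definition rank0 (f : 'I_10) : nat := nth 0 [:: 4; 2; 4; 4; 5; 3; 3; 3; 0; 0] f.

Lemma col0_degree f : same_col_nbrs F_adj col0 f <= 3.
Proof. by rewrite same_col_nbrsF; move: f (mem_F f); apply/allP; vm_compute. Qed.

Lemma col0_degree_ports :
  same_col_nbrs F_adj col0 Fx + same_col_nbrs F_adj col0 Fx' <= 3.
Proof. by rewrite !same_col_nbrsF; vm_compute. Qed.

Lemma col0_x_monochromatic g : ~~ bichromatic F_adj col0 Fx g.
Proof. by move: g (mem_F g); apply/allP; vm_compute. Qed.

Lemma rank0_cert f g1 g2 :
  bichromatic F_adj col0 f g1 -> bichromatic F_adj col0 f g2 ->
  rank0 f <= rank0 g1 -> rank0 f <= rank0 g2 -> g1 = g2.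
Proof.
have cert : all (fun f => all (fun g1 => all (fun g2 =>
    [&& bichromatic F_adj col0 f g1, bichromatic F_adj col0 f g2,
        rank0 f <= rank0 g1 & rank0 f <= rank0 g2] ==> (g1 == g2))
      F_vertices) F_vertices) F_vertices by vm_compute.
move=> fg1 fg2 r1 r2; apply/eqP.
have /allP/(_ g1 (mem_F g1))/allP/(_ g2 (mem_F g2)) := allP cert f (mem_F f).
by rewrite fg1 fg2 r1 r2.
Qed.

Lemma col0_acyclic : acyclic_S3S3_colouring (@Gadj m) (copywise col0).
Proof.
have col0_ports : col0 Fx = col0 Fx' by [].
split.
  case=> [[s f]|s].
    rewrite -phi_inner.
    exact: leq_trans (same_col_nbrs_lift_inner col0_ports s (inner_low f)) (col0_degree _).
  exact: leq_trans (same_col_nbrs_lift_port col0_ports s) col0_degree_ports.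
apply: (@no_cycle_of_rank _ _ (copywise rank0)); first exact/bichromatic_sym/Gadj_sym.
move=> v u1 u2 /(bichromatic_lift col0_ports) [t1 [f1 [g1 [e1 <- fg1]]]].
move=> /(bichromatic_lift col0_ports) [t2 [f2 [g2 [e2 <- fg2]]]].
rewrite -e1 !copywise_phi //; case: v e1 e2 => [[s f]|s] e1 e2.
  rewrite -phi_inner in e1 e2.
  have [-> ef1] := phi_low_inj (inner_low f) e1.
  have [-> ef2] := phi_low_inj (inner_low f) e2; subst f1 f2.
  by move=> r1 r2; rewrite (rank0_cert fg1 fg2 r1 r2).
have at_x' t f g :
    phi t f = w s -> bichromatic F_adj col0 f g -> f = Fx' /\ t = ord_pred s.
  by move=> /phi_port [[-> _]|//]; rewrite (negbTE (col0_x_monochromatic g)).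
have [ef1 ->] := at_x' _ _ _ e1 fg1; have [ef2 ->] := at_x' _ _ _ e2 fg2; subst f1 f2.
by move=> r1 r2; rewrite (rank0_cert fg1 fg2 r1 r2).
Qed.

End Copies.

Theorem mainTheorem9 (m : nat) (hm : 1 <= m) :
  (exists c : Gvert m -> bool, acyclic_S3S3_colouring (@Gadj m) c) /\
  (forall c : Gvert m -> bool, acyclic_S3S3_colouring (@Gadj m) c ->
     (forall s t : 'I_m, c (w s) = c (w t)) /\
     (forall s : 'I_m, saturated3 (@Gadj m) c (w s))).
Proof.
split; first by exists (copywise col0); exact: col0_acyclic.
move=> c acyc; split; last by move=> s; exact: w_saturated.
by apply: (ordS_invariant_const (f := fun s => c (w s))) => s; exact: w_col_ordS.
Qed.
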